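(* Assume the setting described in the context. Let $\mathbf p\in\mathcal C^*$ and let $\mathbf K\in\mathbb N^t$ be its preferred factorization with respect to the factoring order $(\pi_1,\dots,\pi_t)$. Then $\mathbf K$ is the lexicographically largest element of the set $\{\mathbf K'\in\mathbb N^t: K'_1\pi_1+\cdots+K'_t\pi_t=\mathbf p\}$ of all factorizations of $\mathbf p$ into admissible primes.
   Context: $\mathbb N=\{0,1,2,\dots\}$. For a real $n\times n$ matrix $A$ and $f\in\mathbb R[[\mathbf x]]$ put $\mathcal D_Af(\mathbf x)=f'(\mathbf x)A\mathbf x$. Let $(\acute X,\acute Y,\acute Z)$ and $(\grave X,\grave Y,\grave Z)$ be $\mathfrak{sl}_2$ triads (i.e. $[X,Y]=Z,[Z,X]=2X,[Z,Y]=-2Y$) of real $n\times n$ resp. $m\times m$ matrices; set $\acute{\mathcal X}=\mathcal D_{\acute Y}$, $\acute{\mathcal Z}=\mathcal D_{\acute Z}$ on $\mathbb R[[\mathbf x]]$ and $\grave{\mathcal X}=\mathcal D_{\grave Y}$, $\grave{\mathcal Z}=\mathcal D_{\grave Z}$ on $\mathbb R[[\mathbf y]]$; $\acute{\mathcal J}=\ker\acute{\mathcal X}$, $\grave{\mathcal J}=\ker\grave{\mathcal X}$. A weight invariant is an element $f$ of $\acute{\mathcal J}$ (resp. $\grave{\mathcal J}$) with $\acute{\mathcal Z}f=\widehat ff$ (resp. $\grave{\mathcal Z}f=\widehat ff$). Let $\alpha=(\alpha_1,\dots,\alpha_p)$ be a Hilbert basis of $\acute{\mathcal J}$ (homogeneous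 weight invariants, weights $\widehat\alpha_i$, whose monomials $\alpha^{\mathbf k}$ span $\acute{\mathcal J}$ by countable linear combinations) and $\beta=(\beta_1,\dots,\beta_q)$ one of $\grave{\mathcal J}$ (weights $\widehat\beta_j$); $\widehat\alpha\mathbf k=\sum\widehat\alpha_ik_i$, $\widehat\beta\boldsymbol\ell=\sum\widehat\beta_j\ell_j$. Let $\acute A\subset\mathbb N^p$, $\grave A\subset\mathbb N^q$ be standard preferred sets: the monomials $\alpha^{\mathbf k}$, $\mathbf k\in\acute A$, are pairwise distinct, linearly independent and span $\acute{\mathcal J}$ by countable linear combinations, and $\acute A$ is closed under passing to componentwise smaller vectors in $\mathbb N^p$; likewise for $\grave A$. Transvectant cone $\mathcal C=\{(\mathbf k;\boldsymbol\ell;s)\in\mathbb N^{p+q+1}:s\le\widehat\alpha\mathbf k,\ s\le\widehat\beta\boldsymbol\ell\}$; $\mathcal C^*=\{(\mathbf k;\boldsymbol\ell;s)\in\mathcal C:\mathbf k\in\acute A,\boldsymbol\ell\in\grave A\}$. A prime is a nonzero element of $\mathcal C$ not a sum of two nonzero elements of $\mathcal C$; $\Pi^*=\{\pi_1,\dots,\pi_t\}$ is the set of primes lying in $\mathcal C^*$, listed in a fixed order (the factoring order). The preferred factorization of $\mathbf p\in\mathcal C^*$ is the vector $\mathbf K\in\mathbb N^t$ obtained greedily: $K_1=\max\{j\in\mathbb N:\mathbf p-j\pi_1\in\mathcal C\}$, and for $i=2,\dots,t$, $K_i=\max\{j:\mathbf p-K_1\pi_1-\cdots-K_{i-1}\pi_{i-1}-j\pi_i\in\mathcal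 C\}$ (one has $\sum K_i\pi_i=\mathbf p$). Lexicographic order on $\mathbb N^t$ compares the first differing entry. *)

From mathcomp Require Import all_boot.
Set Implicit Arguments. Unset Strict Implicit. Unset Printing Implicit Defensive.

(* A point (k; l; s) of N^(np + nq + 1). *)
Definition tpoint (np nq : nat) : Type :=
  ({ffun 'I_np -> nat} * {ffun 'I_nq -> nat} * nat)%type.

Section Cone.
Variables (np nq : nat).
Local Notation pt := (tpoint np nq).

Definition vzero : pt := ([ffun => 0], [ffun => 0], 0).
Definition vadd (u v : pt) : pt :=
  ([ffun i => u.1.1 i + v.1.1 i], [ffun j => u.1.2 j + v.1.2 j], u.2 + v.2).
Definition vscale (c : nat) (u : pt) : pt :=
  ([ffun i => c * u.1.1 i], [ffun j => c * u.1.2 j], c * u.2).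

Definition wdeg n (w : 'I_n -> nat) (k : {ffun 'I_n -> nat}) : nat :=
  \sum_(i < n) w i * k i.

Definition inC (wa : 'I_np -> nat) (wb : 'I_nq -> nat) (x : pt) : Prop :=
  x.2 <= wdeg wa x.1.1 /\ x.2 <= wdeg wb x.1.2.

Definition inCstar wa wb (Aa : {ffun 'I_np -> nat} -> Prop)
  (Ab : {ffun 'I_nq -> nat} -> Prop) (x : pt) : Prop :=
  inC wa wb x /\ Aa x.1.1 /\ Ab x.1.2.

Definition primeC wa wb (x : pt) : Prop :=
  inC wa wb x /\ x <> vzero /\
  ~ (exists u v, inC wa wb u /\ inC wa wb v /\ u <> vzero /\ v <> vzero /\
                 x = vadd u v).

Definition minus_inC wa wb (x v : pt) : Prop :=
  exists r, inC wa wb r /\ vadd r v = x.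

Definition partial_comb t (K : 'I_t -> nat) (pi : 'I_t -> pt) (m : nat) : pt :=
  \big[vadd/vzero]_(i < t | i < m) vscale (K i) (pi i).

Definition comb t (K : 'I_t -> nat) (pi : 'I_t -> pt) : pt :=
  \big[vadd/vzero]_(i < t) vscale (K i) (pi i).

Definition preferred_factorization wa wb t (pi : 'I_t -> pt) (x : pt)
  (K : 'I_t -> nat) : Prop :=
  forall i : 'I_t,
    minus_inC wa wb x (vadd (partial_comb K pi i) (vscale (K i) (pi i))) /\
    (forall j, minus_inC wa wb x (vadd (partial_comb K pi i) (vscale j (pi i))) ->
               j <= K i).
End Cone.

Definition lex_le t (K' K : 'I_t -> nat) : Prop :=
  (forall i, K' i = K i) \/
  (exists i : 'I_t, (forall j : 'I_t, j < i -> K' j = K j) /\ K' i < K i).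

Definition lex_greatest t (S : ('I_t -> nat) -> Prop) (K : 'I_t -> nat) : Prop :=
  S K /\ forall K', S K' -> lex_le K' K.

Definition down_closed n (A : {ffun 'I_n -> nat} -> Prop) : Prop :=
  forall k k' : {ffun 'I_n -> nat}, A k -> (forall i, k' i <= k i) -> A k'.

From HB Require Import structures.
From mathcomp Require Import all_boot.
From Stdlib Require Import Classical.
Set Implicit Arguments. Unset Strict Implicit. Unset Printing Implicit Defensive.

(* The greedy choice of [K_i] never forfeits a factorization: if some
   factorization [K'] agreed with [K] before [i] and had [K'_i > K_i], the
   remaining terms of [K'] would witness [x - (K_1 pi_1 + ... + K'_i pi_i) \in C],
   against the maximality of [K_i].  That the greedy vector factors [x] at all
   comes from the same maximality: a nonzero remainder [r \in C] of [x] splits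
   off a prime of [C], which lies in [C^*] because [C^*] is downward closed in
   its [k] and [l] coordinates, hence is some [pi_i], and [K_i] could have been
   increased. *)

Section ConeArithmetic.
Variables (np nq : nat).
Local Notation pt := (tpoint np nq).
Local Notation vzero := (@vzero np nq).

Lemma pt_ext (u v : pt) : u.1.1 =1 v.1.1 -> u.1.2 =1 v.1.2 -> u.2 = v.2 -> u = v.
Proof.
case: u v => [[a b] c] [[a' b'] c'] /= eq_a eq_b ->.
by congr (_, _, _); apply/ffunP.
Qed.

Lemma vaddC (u v : pt) : vadd u v = vadd v u.
Proof. by apply: pt_ext => [i|i|] /=; rewrite ?ffunE addnC. Qed.

Lemma vaddA (u v w : pt) : vadd u (vadd v w) = vadd (vadd u v) w.
Proof. by apply: pt_ext => [i|i|] /=; rewrite ?ffunE addnA. Qed.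

Lemma vadd0l (u : pt) : vadd vzero u = u.
Proof. by apply: pt_ext => [i|i|] /=; rewrite ?ffunE. Qed.

HB.instance Definition _ :=
  Monoid.isComLaw.Build pt vzero (@vadd np nq) vaddA vaddC vadd0l.

Lemma vscaleS k (u : pt) : vscale k.+1 u = vadd (vscale k u) u.
Proof. by apply: pt_ext => [i|i|] /=; rewrite ?ffunE mulSn addnC. Qed.

Definition ptsize (u : pt) : nat := \sum_i u.1.1 i + \sum_j u.1.2 j + u.2.

Lemma ptsize_add (u v : pt) : ptsize (vadd u v) = ptsize u + ptsize v.
Proof.
have sum_ffun_add n (a b : {ffun 'I_n -> nat}) :
    \sum_(i < n) [ffun i => a i + b i] i = \sum_(i < n) a i + \sum_(i < n) b i.
  by rewrite -big_split; apply: eq_bigr => i _; rewrite ffunE.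
by rewrite /ptsize /= !sum_ffun_add (addnACA (\sum_(i < np) u.1.1 i)) addnACA.
Qed.

Lemma ptsize_gt0 (u : pt) : u <> vzero -> 0 < ptsize u.
Proof.
move=> u_neq0; rewrite lt0n /ptsize !addn_eq0; apply/negP.
case/andP=> [/andP [sa0 sb0] /eqP c0].
apply: u_neq0; apply: pt_ext => [i|i|] /=; rewrite ?ffunE //.
- by move: sa0; rewrite sum_nat_eq0 => /forallP /(_ i) /eqP.
- by move: sb0; rewrite sum_nat_eq0 => /forallP /(_ i) /eqP.
Qed.

Variables (wa : 'I_np -> nat) (wb : 'I_nq -> nat).
Local Notation inC := (inC wa wb).

Lemma wdeg_add n (w : 'I_n -> nat) (a b : {ffun 'I_n -> nat}) :
  wdeg w [ffun i => a i + b i] = wdeg w a + wdeg w b.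
Proof. by rewrite /wdeg -big_split; apply: eq_bigr => i _; rewrite ffunE mulnDr. Qed.

Lemma wdeg_scale n (w : 'I_n -> nat) c (a : {ffun 'I_n -> nat}) :
  wdeg w [ffun i => c * a i] = c * wdeg w a.
Proof. by rewrite /wdeg big_distrr; apply: eq_bigr => i _; rewrite ffunE mulnCA. Qed.

Lemma inC0 : inC vzero.
Proof. by []. Qed.

Lemma inC_add (u v : pt) : inC u -> inC v -> inC (vadd u v).
Proof. by case=> ua ub [va vb]; rewrite /inC /= !wdeg_add; split; apply: leq_add. Qed.

Lemma inC_scale c (u : pt) : inC u -> inC (vscale c u).
Proof. by case=> ua ub; rewrite /inC /= !wdeg_scale; split; apply: leq_mul. Qed.

Lemma inC_prime_summand (r : pt) : inC r -> r <> vzero ->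
  exists p u, primeC wa wb p /\ inC u /\ r = vadd p u.
Proof.
move Hn : (ptsize r) => n; elim/ltn_ind: n r Hn => n IH r size_r r_C r_neq0.
have [r_prime | r_not_prime] := classic (primeC wa wb r).
  by exists r, vzero; rewrite vaddC vadd0l.
have [u [v [u_C [v_C [u_neq0 [v_neq0 ruv]]]]]] :
    exists u v, inC u /\ inC v /\ u <> vzero /\ v <> vzero /\ r = vadd u v.
  by apply: NNPP => no_split; apply: r_not_prime.
have size_u : ptsize u < n.
  by rewrite -size_r ruv ptsize_add -{1}[ptsize u]addn0 ltn_add2l ptsize_gt0.
have [p [u' [p_prime [u'_C u_eq]]]] := IH _ size_u u erefl u_C u_neq0.
exists p, (vadd u' v); split=> //; split; first exact: inC_add.
by rewrite ruv u_eq vaddA.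
Qed.

Lemma inCstar_summand (Aa : {ffun 'I_np -> nat} -> Prop)
    (Ab : {ffun 'I_nq -> nat} -> Prop) (x u v : pt) :
  down_closed Aa -> down_closed Ab ->
  inCstar wa wb Aa Ab x -> inC u -> x = vadd u v -> inCstar wa wb Aa Ab u.
Proof.
move=> hAa hAb [_ [x_Aa x_Ab]] u_C xuv; split=> //; split.
- by apply: (hAa _ _ x_Aa) => i; rewrite xuv ffunE leq_addr.
- by apply: (hAb _ _ x_Ab) => j; rewrite xuv ffunE leq_addr.
Qed.

End ConeArithmetic.

Section Combinations.
Variables (np nq : nat) (wa : 'I_np -> nat) (wb : 'I_nq -> nat).
Variables (t : nat) (pi : 'I_t -> tpoint np nq).
Hypothesis pi_C : forall i, inC wa wb (pi i).
Local Notation vzero := (@vzero np nq).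

Definition comb_after (K : 'I_t -> nat) (i : nat) : tpoint np nq :=
  \big[@vadd np nq/vzero]_(j < t | i < j) vscale (K j) (pi j).

Lemma partial_comb0 K : partial_comb K pi 0 = vzero.
Proof. exact: big_pred0. Qed.

Lemma partial_combS K (i : 'I_t) :
  partial_comb K pi i.+1 = vadd (partial_comb K pi i) (vscale (K i) (pi i)).
Proof.
rewrite /partial_comb (bigD1 i) //= vaddC; congr vadd.
by apply: eq_bigl => j; rewrite ltnS ltn_neqAle andbC.
Qed.

Lemma partial_comb_ge K m : t <= m -> partial_comb K pi m = comb K pi.
Proof. by move=> le_tm; apply: eq_bigl => j; apply: leq_trans le_tm. Qed.

Lemma eq_partial_comb K K' m : (forall j : 'I_t, j < m -> K j = K' j) ->
  partial_comb K pi m = partial_comb K' pi m.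
Proof. by move=> eqKK'; apply: eq_bigr => j /eqKK' ->. Qed.

Lemma comb_split K (i : 'I_t) :
  comb K pi = vadd (partial_comb K pi i.+1) (comb_after K i).
Proof.
rewrite /comb (bigID (fun j : 'I_t => j < i.+1)) /=; congr vadd.
by apply: eq_bigl => j; rewrite ltnS -ltnNge.
Qed.

Lemma inC_comb_after K i : inC wa wb (comb_after K i).
Proof.
apply: (big_ind (inC wa wb)); [exact: inC0 | exact: inC_add |].
by move=> j _; apply: inC_scale.
Qed.

Lemma minus_inC_comb K (i : 'I_t) :
  minus_inC wa wb (comb K pi) (partial_comb K pi i.+1).
Proof.
exists (comb_after K i); split; first exact: inC_comb_after.
by rewrite vaddC -comb_split.
Qed.

End Combinations.

Lemma lex_le_first_diff t (K' K : 'I_t -> nat) :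
  (forall i : 'I_t, (forall j : 'I_t, j < i -> K' j = K j) -> K' i <= K i) ->
  lex_le K' K.
Proof.
move=> first_diff_le.
have [/existsP [i0 neq_i0] | /existsPn eqKK'] := boolP [exists i, K' i != K i].
  right; case: (@arg_minnP _ i0 (fun i => K' i != K i) val neq_i0) => i neq_i min_i.
  have agree_below (j : 'I_t) : j < i -> K' j = K j.
    by move=> lt_ji; apply/eqP; apply: contraTT lt_ji => /min_i; rewrite -leqNgt.
  exists i; split=> //; rewrite ltn_neqAle neq_i.
  exact: first_diff_le.
by left=> i; apply/eqP; move: (eqKK' i); rewrite negbK.
Qed.

Section PreferredFactorization.
Variables (np nq : nat) (wa : 'I_np -> nat) (wb : 'I_nq -> nat).
Variables (t : nat) (pi : 'I_t -> tpoint np nq).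
Hypothesis pi_C : forall i, inC wa wb (pi i).
Variables (x : tpoint np nq) (K : 'I_t -> nat).
Hypothesis hK : preferred_factorization wa wb pi x K.

Lemma preferred_minus_partial m : inC wa wb x -> m <= t ->
  minus_inC wa wb x (partial_comb K pi m).
Proof.
move=> x_C; elim: m => [_ | m IH lt_mt].
  by exists x; rewrite partial_comb0 vaddC vadd0l.
by rewrite (partial_combS pi K (Ordinal lt_mt)); case: (hK (Ordinal lt_mt)).
Qed.

Lemma preferred_comb (Aa : {ffun 'I_np -> nat} -> Prop)
    (Ab : {ffun 'I_nq -> nat} -> Prop) :
  down_closed Aa -> down_closed Ab -> inCstar wa wb Aa Ab x ->
  (forall p, primeC wa wb p -> inCstar wa wb Aa Ab p -> exists i, pi i = p) ->
  comb K pi = x.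
Proof.
move=> hAa hAb x_Cstar pi_onto.
have [r [r_C x_eq]] : minus_inC wa wb x (comb K pi).
  by rewrite -(partial_comb_ge pi K (leqnn t)); apply: preferred_minus_partial; case: x_Cstar.
have [r0 | r_neq0] := classic (r = vzero np nq); first by rewrite -x_eq r0 vadd0l.
have [p [u [p_prime [u_C r_eq]]]] := inC_prime_summand r_C r_neq0.
have x_split : x = vadd p (vadd u (comb K pi)) by rewrite -x_eq r_eq vaddA.
have p_Cstar := inCstar_summand hAa hAb x_Cstar (proj1 p_prime) x_split.
have [i pi_eq] := pi_onto p p_prime p_Cstar.
suff : (K i).+1 <= K i by rewrite ltnn.
apply: (proj2 (hK i)).
exists (vadd u (comb_after pi K i)); split; first exact: inC_add (inC_comb_after _ _ _).
rewrite vscaleS [vadd (partial_comb _ _ _) _]vaddA -(partial_combS pi K i) pi_eq.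
rewrite -x_eq r_eq (comb_split _ K i).
rewrite [vadd p u]vaddC [LHS]Monoid.mulmACA [RHS]Monoid.mulmACA.
by congr (_ _ _); apply: vaddC.
Qed.

Lemma preferred_lex_max K' : comb K' pi = x -> lex_le K' K.
Proof.
move=> comb_K'; apply: lex_le_first_diff => i agree_below.
apply: (proj2 (hK i)).
rewrite (@eq_partial_comb _ _ _ pi K K') => [|j /agree_below //].
by rewrite -partial_combS -comb_K'; apply: minus_inC_comb.
Qed.

End PreferredFactorization.

Theorem theorem11p8
  (np nq : nat) (wa : 'I_np -> nat) (wb : 'I_nq -> nat)
  (Aa : {ffun 'I_np -> nat} -> Prop) (Ab : {ffun 'I_nq -> nat} -> Prop)
  (hAa : down_closed Aa) (hAb : down_closed Ab)
  (t : nat) (pi : 'I_t -> tpoint np nq)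
  (pi_inj : injective pi)
  (pi_spec : forall x : tpoint np nq,
      (primeC wa wb x /\ inCstar wa wb Aa Ab x) <-> exists i, pi i = x)
  (x : tpoint np nq) (hx : inCstar wa wb Aa Ab x)
  (K : 'I_t -> nat) (hK : preferred_factorization wa wb pi x K) :
  lex_greatest (fun K' : 'I_t -> nat => comb K' pi = x) K.
Proof.
have pi_C i : inC wa wb (pi i).
  by have [[[]]] := proj2 (pi_spec (pi i)) (ex_intro _ i erefl).
split; last exact: preferred_lex_max.
apply: (preferred_comb pi_C hK hAa hAb hx) => p p_prime p_Cstar.
by apply/pi_spec.
Qed.
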